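(* Let $S \subseteq \mathbb{R}^n$ be nonempty, closed and convex, and let $F_i = f_i + g_i$, $i = 1,\dots,m$, where each $f_i \colon S \to \mathbb{R}$ is continuously differentiable (not necessarily convex) and each $g_i \colon S \to \mathbb{R}$ is convex (not necessarily differentiable). For $\ell > 0$ define \[ w_\ell(x) := \max_{y \in S} \min_{i = 1,\dots,m} \left\{ \nabla f_i(x)^\top (x - y) + g_i(x) - g_i(y) - \frac{\ell}{2}\|x - y\|^2 \right\}, \quad x\in S. \] Then $w_\ell(x) \ge 0$ for all $x \in S$. Moreover, $x \in S$ is Pareto stationary for $\min_{x \in S} F(x)$, $F = (F_1,\dots,F_m)^\top$, if and only if $w_\ell(x) = 0$.
   Context: A point $\bar x \in S$ is Pareto stationary for $\min_{x\in S}F(x)$ if $\max_{i=1,\dots,m} F_i'(\bar x; z - \bar x) \ge 0$ for all $z \in S$, where $F_i'(x;d) := \lim_{t\searrow0}(F_i(x+td)-F_i(x))/t$ is the directional derivative. *)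

From HB Require Import structures.
From mathcomp Require Import all_boot all_order all_algebra.
From mathcomp Require Import all_classical all_reals all_analysis.
Set Implicit Arguments. Unset Strict Implicit. Unset Printing Implicit Defensive.
Import Order.TTheory GRing.Theory Num.Theory.
Import numFieldNormedType.Exports.
Local Open Scope classical_set_scope.
Local Open Scope ring_scope.

Definition sqnorm {R : realType} {n : nat} (v : 'rV[R]_n) : R :=
  \sum_(j < n) (v ord0 j) ^+ 2.

(* Convexity of g on the convex set S (values of g outside S are irrelevant). *)
Definition convex_on {R : realType} {n : nat} (S : set 'rV[R]_n)
  (g : 'rV[R]_n -> R) : Prop :=
  forall x y (t : R), S x -> S y -> 0 <= t <= 1 ->
    g (t *: x + (1 - t) *: y) <= t * g x + (1 - t) * g y.

Definition C1_on {R : realType} {n : nat} (U : set 'rV[R]_n)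
  (f : 'rV[R]_n -> R) : Prop :=
  (forall x, U x -> differentiable f x) /\
  (forall v : 'rV[R]_n, {in U, continuous (fun x => 'd f x v)}).

Definition dirder {R : realType} {n : nat} (F : 'rV[R]_n -> R)
  (x d : 'rV[R]_n) : \bar R :=
  lim ((fun t : R => ((F (x + t *: d) - F x) / t)%:E) @ 0^'+).

Definition pareto_stationary {R : realType} {n m : nat} (S : set 'rV[R]_n)
  (F : 'I_m -> 'rV[R]_n -> R) (xb : 'rV[R]_n) : Prop :=
  S xb /\
  forall z, S z -> (0 <= \big[Order.max/-oo%E]_(i < m) dirder (F i) xb (z - xb))%E.

Definition w_merit {R : realType} {n m : nat} (S : set 'rV[R]_n)
  (f g : 'I_m -> 'rV[R]_n -> R) (l : R) (x : 'rV[R]_n) : \bar R :=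
  ereal_sup [set (\big[Order.min/+oo%E]_(i < m)
                   ('d (f i) x (x - y) + g i x - g i y - l / 2 * sqnorm (x - y))%:E)%E
            | y in S].

From HB Require Import structures.
From mathcomp Require Import all_boot all_order all_algebra.
From mathcomp Require Import all_classical all_reals all_analysis.
From mathcomp Require Import ring lra.
Import Order.TTheory GRing.Theory Num.Theory.
Import numFieldNormedType.Exports.
Local Open Scope classical_set_scope.
Local Open Scope ring_scope.

(** Write [phi_i(x, y)] for the [i]-th term inside [w_l].  Since
    [phi_i(x, x) = 0] we get [w_l >= 0], and [w_l(x) = 0] iff no [y] in [S]
    makes every [phi_i(x, y)] positive.  For convex [g] the difference quotient
    [(g (x + t d) - g x) / t] is nondecreasing in [t], so [F_i'(x; d)] exists
    and equals [grad f_i(x)^T d + inf_(0 < t <= 1) quotient]; taking [t = 1]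
    gives [F_i'(x; y - x) <= - phi_i(x, y) - l/2 |y - x|^2], hence a [y] with
    all [phi_i(x, y) > 0] is a common descent direction.  Conversely
    [phi_i(x, x + t d) = - t (grad f_i(x)^T d + quotient(t) + l t/2 |d|^2)] and
    the bracket tends to [F_i'(x; d)] as [t -> 0+], so a common descent
    direction [d] yields, for small [t], a point [x + t d] of [S] with all
    [phi_i > 0]. *)

Section DirectionalDerivative.
Context {R : realType} {n : nat}.
Implicit Types (S : set 'rV[R]_n) (f g : 'rV[R]_n -> R) (x y z d : 'rV[R]_n).

Definition dquot f x d (t : R) : R := (f (x + t *: d) - f x) / t.

Lemma dquot_cvg_diff f x d :
  differentiable f x -> dquot f x d @ 0^'+ --> 'd f x d.
Proof.
move=> df; have fd : derivable f x d by exact: diff_derivable.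
have : (fun h : R => h^-1 *: ((f \o shift x) (h *: d) - f x)) @ 0^' --> 'D_d f x
  := fd.
rewrite deriveE // => /cvg_dnbhs_at_right; apply: cvg_trans.
by apply: near_eq_cvg; near=> t; rewrite /dquot /= (addrC (t *: d)) mulrC.
Unshelve. all: by end_near. Qed.

Lemma convex_set_segment S x z t :
  convex_set S -> S x -> S z -> 0 <= t <= 1 -> S (x + t *: (z - x)).
Proof.
move=> cS Sx Sz /andP[t0 t1].
have := cS z x (Itv01 t0 t1); rewrite !inE => /(_ Sz Sx).
congr S; change (t *: z + (1 - t) *: x = x + t *: (z - x)).
by rewrite scalerBl scale1r scalerBr addrCA.
Qed.

Lemma sqnorm_ge0 d : 0 <= sqnorm d.
Proof. by apply: sumr_ge0 => j _; exact: sqr_ge0. Qed.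

Lemma sqnorm0 : sqnorm (0 : 'rV[R]_n) = 0.
Proof. by rewrite /sqnorm big1 // => j _; rewrite mxE expr0n. Qed.

Lemma sqnormZ t d : sqnorm (t *: d) = t ^+ 2 * sqnorm d.
Proof. by rewrite /sqnorm mulr_sumr; apply: eq_bigr => j _; rewrite mxE exprMn. Qed.

Lemma sqnormN d : sqnorm (- d) = sqnorm d.
Proof. by rewrite -scaleN1r sqnormZ sqrrN expr1n mul1r. Qed.

Definition merit_obj f g (l : R) x y : R :=
  'd f x (x - y) + g x - g y - l / 2 * sqnorm (x - y).

Lemma merit_obj_diag f g l x : merit_obj f g l x x = 0.
Proof. by rewrite /merit_obj subrr linear0 sqnorm0 mulr0 subr0 add0r subrr. Qed.

Lemma merit_obj_segment f g l x d t : t != 0 ->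
  merit_obj f g l x (x + t *: d) =
    - t * ('d f x d + dquot g x d t + l / 2 * t * sqnorm d).
Proof.
move=> t0; rewrite /merit_obj /dquot opprD addrA subrr add0r sqnormN sqnormZ.
rewrite linearN linearZ /=; change (t *: 'd f x d) with (t * 'd f x d).
by field.
Qed.

Section ConvexPart.
Context {S : set 'rV[R]_n} {g : 'rV[R]_n -> R}.
Context (cS : convex_set S) (cg : convex_on S g) {x : 'rV[R]_n} (Sx : S x).

Lemma dquot_convex_le z s t : S z -> 0 < s -> s <= t -> t <= 1 ->
  dquot g x (z - x) s <= dquot g x (z - x) t.
Proof.
move=> Sz s0 st t1; have t0 : 0 < t := lt_le_trans s0 st.
set y := x + t *: (z - x).
have Sy : S y by apply: convex_set_segment; rewrite ?(ltW t0).
have sy : x + s *: (z - x) = (s / t) *: y + (1 - s / t) *: x.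
  by apply/rowP => j; rewrite !mxE; field; exact: lt0r_neq0.
have st01 : 0 <= s / t <= 1.
  by rewrite divr_ge0 ?(ltW s0) ?(ltW t0) //= ler_pdivrMr // mul1r.
have := cg y x (s / t) Sy Sx st01; rewrite -sy => cvx.
rewrite /dquot ler_pdivrMr // -/y.
have -> : (g y - g x) / t * s = s / t * g y + (1 - s / t) * g x - g x by ring.
by rewrite lerD2r.
Qed.

Lemma dquot_convex_cvg z : S z ->
  (fun t => (dquot g x (z - x) t)%:E) @ 0^'+ -->
    ereal_inf [set (dquot g x (z - x) t)%:E | t in `]0, 1]].
Proof.
move=> Sz; apply: (@nondecreasing_at_right_cvge _ _ 0 (BRight 1)).
  by rewrite bnd_simp.
move=> s t; rewrite !in_itv /= => /andP[s0 _] /andP[_ t1] st.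
by rewrite lee_fin dquot_convex_le.
Qed.

Lemma dirder_convexE z : S z ->
  dirder g x (z - x) = ereal_inf [set (dquot g x (z - x) t)%:E | t in `]0, 1]].
Proof. by move=> Sz; apply: cvg_lim => //; exact: dquot_convex_cvg. Qed.

Lemma dirder_convex_le z : S z -> (dirder g x (z - x) <= (g z - g x)%:E)%E.
Proof.
move=> Sz; rewrite dirder_convexE //; apply: ereal_inf_lbound; exists 1.
  by rewrite /= in_itv /= ltr01 lexx.
by rewrite /dquot scale1r divr1 (addrC x) subrK.
Qed.

Lemma dquot_cvg_dirder z : S z ->
  (fun t => (dquot g x (z - x) t)%:E) @ 0^'+ --> dirder g x (z - x).
Proof. by move=> Sz; rewrite dirder_convexE //; exact: dquot_convex_cvg. Qed.

Context {f : 'rV[R]_n -> R} (df : differentiable f x).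

Lemma dirderD z : S z ->
  dirder (f \+ g) x (z - x) = ('d f x (z - x))%:E + dirder g x (z - x).
Proof.
move=> Sz; apply: cvg_lim => //.
have fcvg : (fun t => (dquot f x (z - x) t)%:E) @ 0^'+ --> ('d f x (z - x))%:E.
  by apply: cvg_EFin; [near=> t | exact: dquot_cvg_diff].
apply: cvg_trans (cvgeD (fin_num_adde_defr _ _) fcvg (dquot_cvg_dirder _ Sz)) => //.
apply: near_eq_cvg; near=> t => /=.
by rewrite /dquot -EFinD -mulrDl opprD addrACA.
Unshelve. all: by end_near. Qed.

Lemma dirderD_le y : S y ->
  (dirder (f \+ g)%R x (y - x) <= ('d f x (y - x) + (g y - g x))%:E)%E.
Proof. by move=> Sy; rewrite dirderD // EFinD leeD2l // dirder_convex_le. Qed.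

Lemma dquotD_cvg z : S z ->
  (fun t => ('d f x (z - x) + dquot g x (z - x) t)%:E) @ 0^'+ -->
    dirder (f \+ g) x (z - x).
Proof.
move=> Sz; rewrite dirderD //.
by apply: cvg_trans (cvgeD (fin_num_adde_defr _ _)
  (cvg_cst ('d f x (z - x))%:E) (dquot_cvg_dirder _ Sz)).
Qed.

Context {l : R} (l0 : 0 < l).

Lemma merit_obj_gt0_dirder_lt0 y : S y -> 0 < merit_obj f g l x y ->
  (dirder (f \+ g)%R x (y - x) < 0)%E.
Proof.
move=> Sy; rewrite /merit_obj -[x - y]opprB linearN /= sqnormN => phi_gt0.
apply: le_lt_trans (dirderD_le _ Sy) _; rewrite lte_fin.
have : 0 <= l / 2 * sqnorm (y - x).
  by apply: mulr_ge0; [rewrite divr_ge0 // ltW | exact: sqnorm_ge0].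
lra.
Qed.

Lemma dirder_lt0_merit_obj_gt0 z : S z -> (dirder (f \+ g)%R x (z - x) < 0)%E ->
  \forall t \near 0^'+, 0 < merit_obj f g l x (x + t *: (z - x)).
Proof.
move=> Sz neg; set d := z - x.
pose Q t := 'd f x d + dquot g x d t + l / 2 * t * sqnorm d.
have Qcvg : (fun t => (Q t)%:E) @ 0^'+ --> dirder (f \+ g) x d.
  have penalty_cvg : (fun t => (l / 2 * t * sqnorm d)%:E) @ 0^'+ --> 0%:E.
    apply: cvg_EFin; first by near=> t.
    have : (fun t : R => l / 2 * t * sqnorm d) @ 0 --> l / 2 * 0 * sqnorm d.
      by apply: cvgMr_tmp; apply: cvgMl_tmp; exact: cvg_id.
    by rewrite mulr0 mul0r => /cvg_at_right_filter.
  have := cvgeD (@fin_num_adde_defl _ _ 0%:E isT) (dquotD_cvg _ Sz) penalty_cvg.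
  by rewrite adde0 => sum_cvg; exact: sum_cvg.
have Q_lt0 : \forall t \near 0^'+, ((Q t)%:E < 0)%E.
  apply: (Qcvg [set e | e < 0]%E); apply: open_nbhs_nbhs.
  by split; [exact: open_ereal_lt_ereal|].
near=> t; have t_gt0 : 0 < t by near: t; exact: nbhs_right_gt.
rewrite merit_obj_segment ?gt_eqF // mulNr -mulrN mulr_gt0 // oppr_gt0.
by rewrite -lte_fin; near: t.
Unshelve. all: by end_near. Qed.

End ConvexPart.
End DirectionalDerivative.

Section MeritFunction.
Context {R : realType} {n m : nat} {S : set 'rV[R]_n}.
Context {f g : 'I_m -> 'rV[R]_n -> R} {l : R}.
Context (cS : convex_set S) (cg : forall i, convex_on S (g i)) (l0 : 0 < l).
Context {x : 'rV[R]_n} (Sx : S x) (df : forall i, differentiable (f i) x).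

Definition merit_min y : \bar R :=
  \big[Order.min/+oo%E]_(i < m) (merit_obj (f i) (g i) l x y)%:E.

Lemma w_merit_ge0 : (0 <= w_merit S f g l x)%E.
Proof.
have : (merit_min x <= w_merit S f g l x)%E by apply: ereal_sup_ubound; exists x.
by apply: le_trans; apply: le_bigmin => // i _; rewrite merit_obj_diag.
Qed.

Lemma w_merit_eq0P :
  w_merit S f g l x = 0%E <-> forall y, S y -> (merit_min y <= 0)%E.
Proof.
split=> [w0 y Sy | le0]; first by rewrite -w0; apply: ereal_sup_ubound; exists y.
apply/eqP; rewrite eq_le w_merit_ge0 andbT.
by apply: ge_ereal_sup => _ [y Sy <-]; exact: le0.
Qed.

Lemma pareto_stationaryP (F : 'I_m -> 'rV[R]_n -> R) :
  pareto_stationary S F x <->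
  forall z, S z -> ~ (forall i, dirder (F i) x (z - x) < 0)%E.
Proof.
split=> [[_ st] z Sz neg | st]; last split=> // z Sz.
  have := st z Sz; rewrite leNgt => /negP; apply.
  by apply/bigmax_ltP; split=> // i _; exact: neg.
rewrite leNgt; apply/negP => /bigmax_ltP[_ neg].
exact: (st z Sz (fun i => neg i isT)).
Qed.

Lemma merit_min_le0_of_pareto_stationary :
  pareto_stationary S (fun i => f i \+ g i) x ->
  forall y, S y -> (merit_min y <= 0)%E.
Proof.
move/pareto_stationaryP => st y Sy; rewrite leNgt; apply/negP.
move=> /bigmin_gtP[_ pos]; apply: (st y Sy) => i.
by apply: (merit_obj_gt0_dirder_lt0 cS (cg i) Sx (df i) l0 _ Sy); rewrite -lte_fin pos.
Qed.

Lemma pareto_stationary_of_merit_min_le0 :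
  (forall y, S y -> (merit_min y <= 0)%E) ->
  pareto_stationary S (fun i => f i \+ g i) x.
Proof.
move=> le0; apply/pareto_stationaryP => z Sz neg.
have : \forall t \near 0^'+, [/\ 0 < t, t < 1 &
    forall i, 0 < merit_obj (f i) (g i) l x (x + t *: (z - x))].
  near=> t; split; [by near: t; exact: nbhs_right_gt
                   | by near: t; exact: nbhs_right_lt |].
  near: t; apply: filter_forall => i.
  exact: (dirder_lt0_merit_obj_gt0 cS (cg i) Sx (df i) _ Sz (neg i)).
case/filter_ex => t [t0 t1 pos].
have Sy : S (x + t *: (z - x)) by apply: convex_set_segment; rewrite ?ltW.
have := le0 _ Sy; rewrite leNgt => /negP; apply; apply/bigmin_gtP.
by split=> // i _; rewrite lte_fin pos.
Unshelve. all: by end_near. Qed.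

End MeritFunction.

Theorem theorem3p10 (R : realType) (n m : nat) (S : set 'rV[R]_n)
  (f g : 'I_m -> 'rV[R]_n -> R) (U : set 'rV[R]_n) (l : R) :
  (0 < m)%N ->
  S !=set0 -> closed S -> convex_set S ->
  open U -> S `<=` U -> (forall i, C1_on U (f i)) ->
  (forall i, convex_on S (g i)) ->
  0 < l ->
  (forall x, S x -> (0 <= w_merit S f g l x)%E) /\
  (forall x, S x ->
     (pareto_stationary S (fun i => f i \+ g i) x <-> w_merit S f g l x = 0%E)).
Proof.
(* [0 < m], [S !=set0] and [closed S] only serve to make the max in [w_l]
   attained; [w_merit] is a supremum in the extended reals and needs none. *)
move=> _ _ _ cS _ SU C1 cg l0.
have df x : S x -> forall i, differentiable (f i) x.
  by move=> Sx i; exact: (C1 i).1 x (SU x Sx).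
split=> x Sx; first exact: w_merit_ge0.
rewrite w_merit_eq0P //; split.
  exact: (merit_min_le0_of_pareto_stationary cS cg l0 Sx (df x Sx)).
exact: (pareto_stationary_of_merit_min_le0 cS cg Sx (df x Sx)).
Qed.
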